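(* Every point $(X_1,X_2,A)\in\mathbb C^2\times\mathbb R$ satisfying $$-2\,\mathrm{Re}(X_1+X_2)-2\,\mathrm{Re}\bigl(X_1\overline{X}_2e^{-2iA}\bigr)+|X_1|^2+|X_2|^2+1=0$$ with $-\pi/2<A<\pi/2$ satisfies $\mathrm{Re}(X_1e^{-iA})\ge0$. *)

From Stdlib Require Import Reals.
From Coquelicot Require Export Coquelicot.
Open Scope R_scope.

Definition cexpi (t : R) : C := (cos t, sin t).

(* With Y1 := X1 e^{-iA} and Y2 := X2 e^{iA}, expanding |Y1 - Y2 + e^{iA}|^2 gives the
   left-hand side of the constraint plus 4 cos A Re Y1.  On the constraint set, therefore,
   4 cos A Re(X1 e^{-iA}) is a squared modulus, and cos A > 0 for |A| < pi/2. *)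
From Stdlib Require Import Reals Lra Psatz.
From Coquelicot Require Import Coquelicot.
Open Scope R_scope.

Lemma Cmod_sqr_Re_Im (z : C) : Cmod z ^ 2 = Re z ^ 2 + Im z ^ 2.
Proof.
  unfold Cmod; rewrite pow2_sqrt; [reflexivity | nra].
Qed.

Lemma cexpi_neg2 (A : R) : cexpi (-2 * A) = (cexpi (- A) * cexpi (- A))%C.
Proof.
  unfold cexpi, Cmult; simpl.
  replace (-2 * A) with (2 * - A) by ring.
  rewrite cos_2a, sin_2a; f_equal; ring.
Qed.

Lemma Cmod_rotated_sqr (X1 X2 : C) (A : R) :
  Cmod (X1 * cexpi (- A) - X2 * cexpi A + cexpi A)%C ^ 2 =
  -2 * Re (X1 + X2)%C - 2 * Re (X1 * Cconj X2 * cexpi (-2 * A))%C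
    + Cmod X1 ^ 2 + Cmod X2 ^ 2 + 1 + 4 * cos A * Re (X1 * cexpi (- A))%C.
Proof.
  rewrite cexpi_neg2, !Cmod_sqr_Re_Im.
  pose proof (sin2_cos2 A) as Hsc; unfold Rsqr in Hsc.
  destruct X1 as [a1 b1], X2 as [a2 b2].
  unfold cexpi; rewrite cos_neg, sin_neg.
  unfold Cplus, Cminus, Copp, Cmult, Cconj; simpl.
  set (c := cos A) in *; set (s := sin A) in *.
  (* As polynomials in (c, s) the two sides differ by a multiple of s^2 + c^2 - 1. *)
  match goal with |- ?lhs = ?rhs =>
    assert (D : lhs - rhs
              = (a1^2 + b1^2 + a2^2 + b2^2 + 1 - 2 * a1 - 2 * a2) * (s * s + c * c - 1))
      by ring
  end.
  rewrite Hsc in D; lra.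
Qed.

Theorem proposition3p10 (X1 X2 : C) (A : R) :
  - PI / 2 < A < PI / 2 ->
  -2 * Re (X1 + X2)%C - 2 * Re (X1 * Cconj X2 * cexpi (-2 * A))%C
    + Cmod X1 ^ 2 + Cmod X2 ^ 2 + 1 = 0 ->
  0 <= Re (X1 * cexpi (- A))%C.
Proof.
  intros HA Hconstraint.
  assert (Hcos : 0 < cos A) by (apply cos_gt_0; lra).
  pose proof Cmod_rotated_sqr X1 X2 A as Hsq.
  rewrite Hconstraint, Rplus_0_l in Hsq.
  pose proof (pow2_ge_0 (Cmod (X1 * cexpi (- A) - X2 * cexpi A + cexpi A)%C)) as Hnonneg.
  nra.
Qed.
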